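(* Let $\lambda\supseteq\mu$ be partitions and $T$ a Dyck tiling of $\lambda\setminus\mu$. Then: (1) $T$ is left-cover-expansive if and only if for every tile $t$ of $T$, $\mathtt{NW}(\operatorname{st}t)\notin\lambda\setminus\mu$; (2) $T$ is right-cover-expansive if and only if for every tile $t$ of $T$, $\mathtt{NE}(\operatorname{en}t)\notin\lambda\setminus\mu$.
   Context: Partitions are identified with Young diagrams $\{(a,b)\in\mathbb N^2:b\le\lambda_a\}$; nodes are elements of $\mathbb N^2$; $(a,b)$ has height $a+b$ and lies in column $b-a$ (smaller column = further left). $\mathtt{NE}(\mathfrak n)=\mathfrak n+(0,1)$, $\mathtt{SW}(\mathfrak n)=\mathfrak n-(0,1)$, $\mathtt{NW}(\mathfrak n)=\mathfrak n+(1,0)$, $\mathtt{SE}(\mathfrak n)=\mathfrak n-(1,0)$. A tile is a finite nonempty set of nodes orderable $\mathfrak n_1,\dots,\mathfrak n_r$ with $\mathfrak n_{i+1}\in\{\mathtt{NE}(\mathfrak n_i),\mathtt{SE}(\mathfrak n_i)\}$; $\operatorname{st}t$ is its leftmost node and $\operatorname{en}t$ its rightmost node; it is a Dyck tile if $\operatorname{st}t,\operatorname{en}t$ both attain the maximal height of nodes of $t$. A Dyck tiling of $\lambda\setminus\mu$ is a partition of $\lambda\setminus\mu$ into Dyck tiles; $\operatorname{tile}(\mathfrak n)$ is the tile containing $\mathfrak n$. The tiling is left-cover-expansive if whenever $\mathfrak a,\mathtt{SE}(\mathfrak a)\in\lambda\setminus\mu$, $\operatorname{st}(\operatorname{tile}(\mathtt{SE}(\mathfrak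 a)))$ lies weakly to the left of $\operatorname{st}(\operatorname{tile}(\mathfrak a))$; right-cover-expansive if whenever $\mathfrak a,\mathtt{SW}(\mathfrak a)\in\lambda\setminus\mu$, $\operatorname{en}(\operatorname{tile}(\mathtt{SW}(\mathfrak a)))$ lies weakly to the right of $\operatorname{en}(\operatorname{tile}(\mathfrak a))$. *)

From mathcomp Require Import all_boot all_algebra.
Set Implicit Arguments. Unset Strict Implicit. Unset Printing Implicit Defensive.
Import GRing.Theory Num.Theory.

(* Nodes are pairs (a,b) of naturals; Young diagrams use 1-indexed rows and
   columns as in the paper: (a,b) with a >= 1, 1 <= b <= lambda_a. *)
Definition node := (nat * nat)%type.

(* A partition is a weakly decreasing sequence of naturals
   (lambda_1 >= lambda_2 >= ...); lambda_a = nth 0 lam a.-1. *)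
Definition is_partition (lam : seq nat) : bool := sorted geq lam.

Definition in_diag (lam : seq nat) (n : node) : bool :=
  [&& 1 <= n.1, 1 <= n.2 & n.2 <= nth 0 lam n.1.-1].

Definition diag_sub (mu lam : seq nat) : Prop :=
  forall n, in_diag mu n -> in_diag lam n.

Definition skew (lam mu : seq nat) (n : node) : bool :=
  in_diag lam n && ~~ in_diag mu n.

Definition height (n : node) : nat := n.1 + n.2.
Definition column (n : node) : int := (n.2%:Z - n.1%:Z)%R.

Definition NE (n : node) : node := (n.1, n.2.+1).
Definition SW (n : node) : node := (n.1, n.2.-1).
Definition NW (n : node) : node := (n.1.+1, n.2).
Definition SE (n : node) : node := (n.1.-1, n.2).

(* A tile is represented by its (unique) ordering n_1, ..., n_r with
   n_{i+1} in {NE n_i, SE n_i}; its set of nodes is the set of entries. *)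
Definition tile_step (x y : node) : bool := (y == NE x) || (y == SE x).

Definition is_tile (t : seq node) : bool :=
  if t is x :: s then path tile_step x s else false.

Definition st (t : seq node) : node := head (0, 0) t.
Definition en (t : seq node) : node := last (0, 0) t.

Definition is_dyck_tile (t : seq node) : bool :=
  is_tile t &&
  all (fun n => (height n <= height (st t)) && (height n <= height (en t))) t.

Definition dyck_tiling (lam mu : seq nat) (T : seq (seq node)) : Prop :=
  [/\ forall t, t \in T -> is_dyck_tile t,
      forall t n, t \in T -> n \in t -> skew lam mu n &
      forall n, skew lam mu n -> count (fun t => n \in t) T = 1].

Definition tile_of (T : seq (seq node)) (n : node) : seq node :=
  nth [::] T (find (fun t => n \in t) T).

Definition left_cover_expansive (lam mu : seq nat) (T : seq (seq node)) : Prop :=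
  forall a : node, skew lam mu a -> skew lam mu (SE a) ->
    (column (st (tile_of T (SE a))) <= column (st (tile_of T a)))%R.

Definition right_cover_expansive (lam mu : seq nat) (T : seq (seq node)) : Prop :=
  forall a : node, skew lam mu a -> skew lam mu (SW a) ->
    (column (en (tile_of T a)) <= column (en (tile_of T (SW a))))%R.

From mathcomp Require Import all_boot.
From mathcomp Require Import order ssralg ssrnum ssrint zify.
Set Implicit Arguments. Unset Strict Implicit. Unset Printing Implicit Defensive.
Import Order.TTheory GRing.Theory Num.Theory.

(* Two facts drive the argument: λ∖μ is order convex, and the nodes of a tile
   advance one column per step, moving up or down by one.  For (1), suppose
   SE a is not the first node of its tile s.  Its predecessor in s is then
   a - (1,1), directly below a.  Walking leftwards from these two nodes, s stays
   strictly below the tile of a (tiles are disjoint), so s cannot start later: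
   otherwise NW (st s) would lie between two nodes of λ∖μ.  If SE a is the first
   node of s, then NW (st s) = a.  Conversely, a start whose NW neighbour a lies
   in λ∖μ breaks the condition at a, since the tile of a starts weakly left of a.
   Part (2) is part (1) for the transposed shape, every tile being transposed
   and reversed. *)

Definition order_convex (S : pred node) : Prop :=
  forall x y z, S x -> S y -> x.1 <= z.1 <= y.1 -> x.2 <= z.2 <= y.2 -> S z.

Definition tiling (S : pred node) (T : seq (seq node)) : Prop :=
  [/\ forall t, t \in T -> is_tile t,
      forall t n, t \in T -> n \in t -> S n &
      forall n, S n -> count (fun t => n \in t) T = 1].

Definition lcover_expansive (S : pred node) (T : seq (seq node)) : Prop :=
  forall a, S a -> S (SE a) ->
    (column (st (tile_of T (SE a))) <= column (st (tile_of T a)))%R.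

Definition rcover_expansive (S : pred node) (T : seq (seq node)) : Prop :=
  forall a, S a -> S (SW a) ->
    (column (en (tile_of T a)) <= column (en (tile_of T (SW a))))%R.

Lemma tile_stepP x y : 0 < x.1 -> tile_step x y ->
  column y = (column x + 1)%R /\
  (height y = (height x).+1 \/ (height y).+1 = height x).
Proof.
case: x y => [a b] [c d] /= a_gt0 /orP[] /eqP[-> ->];
  by rewrite /column /height /=; split; lia.
Qed.

Lemma node_eq x y : column x = column y -> height x = height y -> x = y.
Proof.
by case: x y => [a b] [c d]; rewrite /column /height /= => ? ?; congr (_, _); lia.
Qed.

Lemma below_same_column x y : column y = column x -> height y < height x ->
  [/\ y.1 < x.1, y.2 < x.2 & (height y).+2 <= height x].
Proof. by case: x y => [a b] [c d]; rewrite /column /height /= => ? ?; split; lia. Qed.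

Lemma in_diag_le l y z : is_partition l -> in_diag l y ->
  0 < z.1 <= y.1 -> 0 < z.2 <= y.2 -> in_diag l z.
Proof.
move=> l_part /and3P[/= y1_gt0 _ y2_le] /andP[z1_gt0 z1_le] /andP[z2_gt0 z2_le].
apply/and3P; split => //.
have y_row : y.1.-1 < size l.
  by rewrite ltnNge; apply/negP => /(nth_default 0) row0; move: y2_le; rewrite row0; lia.
have : nth 0 l y.1.-1 <= nth 0 l z.1.-1.
  by apply: (sorted_leq_nth (rev_trans leq_trans) leqnn 0 l_part); rewrite ?inE /=; lia.
lia.
Qed.

Lemma skew_pos lam mu n : skew lam mu n -> 0 < n.1 /\ 0 < n.2.
Proof. by case/andP => /and3P[]. Qed.

Lemma skew_order_convex lam mu :
  is_partition lam -> is_partition mu -> order_convex (skew lam mu).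
Proof.
move=> lam_part mu_part x y z Sx /andP[lam_y _] z1 z2.
have [x1_gt0 x2_gt0] := skew_pos Sx; case/andP: Sx => _ mu_x.
apply/andP; split; first by apply: in_diag_le lam_y _ _ => //; lia.
by apply: contra mu_x => mu_z; apply: in_diag_le mu_z _ _ => //; lia.
Qed.

Section LeftCover.

Variables (S : pred node) (T : seq (seq node)).
Hypotheses (S_pos : forall n, S n -> 0 < n.1 /\ 0 < n.2)
  (S_convex : order_convex S) (T_tiling : tiling S T).

Local Notation node_at t k := (nth (0, 0) t k).

Lemma tiling_sub t n : t \in T -> n \in t -> S n.
Proof. by case: T_tiling => _ + _; apply. Qed.

Lemma tiles_disjoint t s n : t \in T -> s \in T -> n \in t -> n \in s -> t = s.
Proof.
move=> tT sT nt ns; case: T_tiling => _ _ /(_ n (tiling_sub tT nt)).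
rewrite -size_filter.
have : t \in [seq u <- T | n \in u] by rewrite mem_filter nt tT.
have : s \in [seq u <- T | n \in u] by rewrite mem_filter ns sT.
by case: [seq u <- T | n \in u] => [|u []] //; rewrite !inE => /eqP-> /eqP->.
Qed.

Lemma has_tile n : S n -> has (fun t => n \in t) T.
Proof. by case: T_tiling => _ _ count1 /count1 Sn; rewrite has_count Sn. Qed.

Lemma tile_of_in n : S n -> tile_of T n \in T.
Proof. by move/has_tile; rewrite /tile_of has_find => /(mem_nth [::]). Qed.

Lemma mem_tile_of n : S n -> n \in tile_of T n.
Proof. by move/has_tile/(nth_find [::]). Qed.

Lemma tile_of_eq t n : t \in T -> n \in t -> tile_of T n = t.
Proof.
move=> tT nt; have Sn := tiling_sub tT nt.
exact: tiles_disjoint (tile_of_in Sn) tT (mem_tile_of Sn) nt.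
Qed.

Lemma mem_st t : t \in T -> st t \in t.
Proof. by case: T_tiling => tiles _ _ /tiles; case: t => // x s _; apply: mem_head. Qed.

Lemma tile_nth_step t k : t \in T -> k.+1 < size t ->
  column (node_at t k.+1) = (column (node_at t k) + 1)%R /\
  (height (node_at t k.+1) = (height (node_at t k)).+1 \/
   (height (node_at t k.+1)).+1 = height (node_at t k)).
Proof.
move=> tT k_lt.
have [pos _] := S_pos (tiling_sub tT (mem_nth (0, 0) (ltnW k_lt))).
apply: tile_stepP pos _.
case: T_tiling => tiles _ _; move: (tiles t tT).
by case: t {tT} k_lt => // x s k_lt /(pathP (0, 0)) /(_ k k_lt).
Qed.

Lemma column_nth t k : t \in T -> k < size t ->
  column (node_at t k) = (column (st t) + k%:Z)%R.
Proof.
move=> tT; elim: k => [|k IH] k_lt; first by rewrite nth0 addr0.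
have [-> _] := tile_nth_step tT k_lt; rewrite IH ?(ltnW k_lt) //; lia.
Qed.

Lemma column_st_le t n : t \in T -> n \in t -> (column (st t) <= column n)%R.
Proof. by move=> tT nt; rewrite -(nth_index (0, 0) nt) column_nth ?index_mem //; lia. Qed.

(* Walk both tiles leftwards in lockstep: the node of [s] stays strictly below
   that of [t], since heights move by one and disjoint tiles cannot meet.  So
   [s] cannot run out first, as reaching [st s] would put [NW (st s)] between
   two nodes of [S]. *)
Lemma st_column_le_below t s i j : t \in T -> s \in T ->
  i < size t -> j < size s -> ~~ S (NW (st s)) ->
  column (node_at s j) = column (node_at t i) ->
  height (node_at s j) < height (node_at t i) ->
  (column (st s) <= column (st t))%R.
Proof.
move=> tT sT; elim: j i => [|j IH] i i_lt j_lt NW_st col_eq h_lt.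
  case/negP: NW_st; rewrite /st -nth0.
  have [lt1 lt2 _] := below_same_column col_eq h_lt.
  apply: S_convex (tiling_sub sT (mem_nth (0, 0) j_lt))
    (tiling_sub tT (mem_nth (0, 0) i_lt)) _ _; rewrite /NW /=; lia.
case: i i_lt col_eq h_lt => [|i] i_lt col_eq h_lt.
  by rewrite /st -nth0 -col_eq column_st_le // mem_nth.
have [colt ht] := tile_nth_step tT i_lt; have [cols hs] := tile_nth_step sT j_lt.
have [_ _ h_gap] := below_same_column col_eq h_lt.
case: (ltnP (height (node_at s j)) (height (node_at t i))) => h'_lt.
  by apply: IH (ltnW i_lt) (ltnW j_lt) NW_st _ h'_lt; lia.
have same : node_at s j = node_at t i by apply: node_eq; lia.
rewrite (tiles_disjoint tT sT (n := node_at t i)) ?mem_nth ?(ltnW i_lt) //.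
by rewrite -same mem_nth // ltnW.
Qed.

Theorem lcover_expansiveP :
  lcover_expansive S T <-> forall t, t \in T -> ~~ S (NW (st t)).
Proof.
split=> [LCE t tT | NW_st a Sa S_SEa].
  apply/negP => S_NW; have SE_NW : SE (NW (st t)) = st t by case: (st t).
  have := LCE _ S_NW; rewrite SE_NW (tile_of_eq tT (mem_st tT)).
  move=> /(_ (tiling_sub tT (mem_st tT))).
  have := column_st_le (tile_of_in S_NW) (mem_tile_of S_NW).
  by rewrite /column /NW /=; lia.
have [a1_gt0 _] := S_pos Sa.
have [tT a_t] := (tile_of_in Sa, mem_tile_of Sa).
have [sT SEa_s] := (tile_of_in S_SEa, mem_tile_of S_SEa).
move: (tile_of T a) (tile_of T (SE a)) tT a_t sT SEa_s => t s tT a_t sT SEa_s.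
have nth_a := nth_index (0, 0) a_t; have nth_SEa := nth_index (0, 0) SEa_s.
move: (index_mem a t) (index_mem (SE a) s); rewrite a_t SEa_s.
case: (index (SE a) s) nth_SEa => [|j] nth_SEa i_lt j_lt.
  have NW_SE : NW (SE a) = a by rewrite /NW /SE /= prednK //; case: (a).
  by case/negP: (NW_st s sT); rewrite /st -nth0 nth_SEa NW_SE.
have [cols hs] := tile_nth_step sT j_lt.
rewrite nth_SEa in cols hs.
have [colSE hSE] : column (SE a) = (column a + 1)%R /\ (height (SE a)).+1 = height a.
  by rewrite /column /height /SE /=; split; lia.
case: (ltnP (height (node_at s j)) (height a)) => h_lt.
  apply: (st_column_le_below tT sT i_lt (ltnW j_lt) (NW_st s sT));
  by rewrite nth_a //; lia.
have same : node_at s j = a by apply: node_eq; lia.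
by rewrite (tiles_disjoint tT sT a_t) // -same mem_nth // ltnW.
Qed.

End LeftCover.

Definition swap (n : node) : node := (n.2, n.1).

(* Transposition followed by reversal: it exchanges [NE]/[SE] steps, so it
   maps tiles to tiles, swapping their first and last nodes. *)
Definition flip (t : seq node) : seq node := rev (map swap t).

Lemma swapK : involutive swap.
Proof. by case. Qed.

Lemma column_swap n : column (swap n) = (- column n)%R.
Proof. by rewrite /column /=; lia. Qed.

Lemma mem_flip t n : (n \in flip t) = (swap n \in t).
Proof. by rewrite mem_rev -{1}(swapK n) (mem_map (can_inj swapK)). Qed.

Lemma st_flip t : st (flip t) = swap (en t).
Proof.
by case/lastP: t => [|t x] //; rewrite /flip map_rcons rev_rcons /en last_rcons.
Qed.

Lemma tile_step_flip x y : 0 < x.1 -> tile_step x y -> tile_step (swap y) (swap x).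
Proof.
case: x y => [a b] [c d] /= a_gt0 /orP[] /eqP[-> ->].
  by rewrite /tile_step eqxx orbT.
by rewrite /tile_step /swap /NE /= prednK // eqxx.
Qed.

Lemma is_tile_flip t : all (fun n => 0 < n.1) t -> is_tile t -> is_tile (flip t).
Proof.
case: t => [|x t] // pos tile_t; rewrite /flip map_cons lastI rev_rcons /=.
rewrite rev_path path_map; apply: (sub_in_path _ pos tile_t) => y z y_pos _.
exact: tile_step_flip.
Qed.

Lemma tile_of_flip T n : tile_of (map flip T) (swap n) = flip (tile_of T n).
Proof.
rewrite /tile_of find_map (eq_find (a2 := fun t => n \in t)); last first.
  by move=> t /=; rewrite mem_flip swapK.
case: (ltnP (find (fun t => n \in t) T) (size T)) => [lt | ge].
  exact: nth_map.
by rewrite !nth_default ?size_map.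
Qed.

Section Transpose.

Variables (S : pred node) (T : seq (seq node)).
Hypotheses (S_pos : forall n, S n -> 0 < n.1 /\ 0 < n.2) (T_tiling : tiling S T).

Lemma order_convex_swap : order_convex S -> order_convex (S \o swap).
Proof. by move=> S_convex x y z Sx Sy z1 z2; apply: S_convex Sx Sy _ _. Qed.

Lemma tiling_flip : tiling (S \o swap) (map flip T).
Proof.
case: T_tiling => tiles sub count1; split.
- move=> _ /mapP[t tT ->]; apply: is_tile_flip (tiles t tT).
  by apply/allP => n /(sub t n tT) /S_pos[].
- by move=> _ n /mapP[t tT ->]; rewrite mem_flip; apply: sub.
- move=> n /count1 <-; rewrite count_map; apply: eq_count => t /=.
  by rewrite mem_flip.
Qed.

Lemma lcover_expansive_flip :
  lcover_expansive (S \o swap) (map flip T) <-> rcover_expansive S T.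
Proof.
have flipE b : (column (st (tile_of (map flip T) (SE (swap b)))) <=
                column (st (tile_of (map flip T) (swap b))))%R =
               (column (en (tile_of T b)) <= column (en (tile_of T (SW b))))%R.
  have -> : SE (swap b) = swap (SW b) by [].
  by rewrite !tile_of_flip !st_flip !column_swap lerN2.
split=> [LCE b Sb S_SWb | RCE a].
  by rewrite -flipE; apply: LCE; case: b Sb S_SWb.
by rewrite -(swapK a) flipE => Sa S_SEa; apply: RCE.
Qed.

End Transpose.

Theorem rcover_expansiveP (S : pred node) (T : seq (seq node)) :
  (forall n, S n -> 0 < n.1 /\ 0 < n.2) -> order_convex S -> tiling S T ->
  rcover_expansive S T <-> forall t, t \in T -> ~~ S (NE (en t)).
Proof.
move=> S_pos S_convex T_tiling.
have swap_pos n : (S \o swap) n -> 0 < n.1 /\ 0 < n.2 by move/S_pos => [].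
rewrite -lcover_expansive_flip // (lcover_expansiveP swap_pos
  (order_convex_swap S_convex) (tiling_flip S_pos T_tiling)).
have NW_flip t : NW (st (flip t)) = swap (NE (en t)) by rewrite st_flip.
split=> [NW_st t tT | NE_en _ /mapP[t tT ->]].
  by have := NW_st _ (map_f flip tT); rewrite NW_flip /= swapK.
by rewrite NW_flip /= swapK; apply: NE_en.
Qed.

Theorem proposition4p1 (lam mu : seq nat) (T : seq (seq node)) :
  is_partition lam -> is_partition mu -> diag_sub mu lam ->
  dyck_tiling lam mu T ->
  (left_cover_expansive lam mu T <->
     (forall t, t \in T -> ~~ skew lam mu (NW (st t)))) /\
  (right_cover_expansive lam mu T <->
     (forall t, t \in T -> ~~ skew lam mu (NE (en t)))).
Proof.
move=> lam_part mu_part _ [dyck sub count1].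
have T_tiling : tiling (skew lam mu) T.
  by split=> // t /dyck /andP[].
have skew_convex := skew_order_convex lam_part mu_part.
have skew_pos := @skew_pos lam mu.
by split; [apply: lcover_expansiveP | apply: rcover_expansiveP].
Qed.
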